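(* Let $P=\{\mathbf{x}: A\mathbf{x}\le\mathbf{b}\}\subseteq[0,k]^n\subseteq\mathbb{R}^n$ be a $d$-dimensional lattice polytope with integral constraint matrix $A$. Then the monotone diameter of $P$ is at most $(d-1)\|A\|_{\infty}nk+1$.
   Context: A lattice polytope is a polytope whose vertices have integer coordinates. $\|A\|_\infty$ denotes the maximum absolute value of an entry of $A$. A $\mathbf{c}$-monotone path is a sequence of vertices of $P$ in which consecutive vertices are joined by an edge of $P$ and $\mathbf{c}^{\intercal}\mathbf{x}$ strictly increases; its length is its number of edges. The monotone diameter of $P$ is the maximum, over all generic linear objectives $\mathbf{c}$ (not constant on any edge) and all vertices $\mathbf{v}$, of the length of a shortest $\mathbf{c}$-monotone path from $\mathbf{v}$ to the $\mathbf{c}$-maximal vertex. *)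

From HB Require Import structures.
From mathcomp Require Import all_boot all_order all_algebra.
From mathcomp Require Import reals.
Set Implicit Arguments. Unset Strict Implicit. Unset Printing Implicit Defensive.
Import Order.TTheory GRing.Theory Num.Theory.
Local Open Scope ring_scope.

Section Polytopes.
Variable R : realType.
Variable n : nat.

Definition dotv (c x : 'cV[R]_n) : R := \sum_(i < n) c i 0 * x i 0.

Definition polyhedron (m : nat) (A : 'M[int]_(m, n)) (b : 'cV[R]_m)
  : 'cV[R]_n -> Prop :=
  fun x => forall i : 'I_m, (map_mx (fun z : int => z%:~R) A *m x) i 0 <= b i 0.

Variable P : 'cV[R]_n -> Prop.

Definition is_vertex (v : 'cV[R]_n) : Prop :=
  P v /\ exists c : 'cV[R]_n, forall y, P y -> y <> v -> dotv c y < dotv c v.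

Definition is_edge (u v : 'cV[R]_n) : Prop :=
  P u /\ P v /\ u <> v /\
  exists c : 'cV[R]_n,
    (forall y, P y -> dotv c y <= dotv c u) /\ dotv c u = dotv c v /\
    (forall y, P y -> dotv c y = dotv c u ->
       exists t : R, 0 <= t <= 1 /\ y = (1 - t) *: u + t *: v).

Definition lattice_vertices : Prop :=
  forall v, is_vertex v -> forall i : 'I_n, exists z : int, v i 0 = z%:~R.

Definition aff_indep_from (x0 : 'cV[R]_n) (k : nat) (X : 'I_k -> 'cV[R]_n) : bool :=
  row_free (\matrix_(i < k) (X i - x0)^T).

Definition aff_dim (d : nat) : Prop :=
  (exists x0, P x0 /\ exists X : 'I_d -> 'cV[R]_n,
      (forall i, P (X i)) /\ aff_indep_from x0 X) /\
  (forall x0 (X : 'I_d.+1 -> 'cV[R]_n),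
      P x0 -> (forall i, P (X i)) -> ~~ aff_indep_from x0 X).

Definition generic_obj (c : 'cV[R]_n) : Prop :=
  forall u v, is_edge u v -> dotv c u <> dotv c v.

Definition c_max_vertex (c w : 'cV[R]_n) : Prop :=
  is_vertex w /\ forall y, P y -> dotv c y <= dotv c w.

Definition monotone_path (c v w : 'cV[R]_n) (L : nat) : Prop :=
  exists f : nat -> 'cV[R]_n,
    f 0%N = v /\ f L = w /\
    forall i, (i < L)%N -> is_edge (f i) (f i.+1) /\ dotv c (f i) < dotv c (f i.+1).

Definition monotone_diameter_le (D : nat) : Prop :=
  forall c v w, generic_obj c -> is_vertex v -> c_max_vertex c w ->
    exists L, (L <= D)%N /\ monotone_path c v w L.

End Polytopes.

Definition mx_inf_norm (m n : nat) (A : 'M[int]_(m, n)) : nat :=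
  \max_(i < m) \max_(j < n) `|A i j|%N.

(* At a vertex [v], add up [d - 1] tight constraints whose restrictions to the affine
   hull are independent: the result [a] is integral with [||a||_oo <= (d-1)||A||_oo],
   and [v] maximizes it on a face of dimension at most one, i.e. on [v] itself or on
   an edge [[v, u]].  From [v], or from [u] after one edge, follow the shadow-vertex
   path of the objectives [a + mu c], [mu >= 0], up to the [c]-maximal vertex [w]:
   every pivot is a [c]-improving edge that strictly decreases [a], hence by at least
   [1] on lattice vertices, while [a.x - a.w <= (d-1)||A||_oo n k] on [[0, k]^n]. *)

From mathcomp Require Import all_boot all_order all_algebra.
From mathcomp Require Import reals ring lra zify.
From mathcomp Require boolp.
Import Order.TTheory GRing.Theory Num.Theory.
Local Open Scope ring_scope.
Set Implicit Arguments. Unset Strict Implicit. Unset Printing Implicit Defensive.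

Lemma seq_argmin (R : realDomainType) (T : eqType) (s : seq T) (P : pred T)
    (F : T -> R) :
  has P s -> exists2 x, x \in s & P x /\ forall y, y \in s -> P y -> F x <= F y.
Proof.
elim: s => //= a s IH; case Pa: (P a) => /= Ps.
  have [/IH [x xs [Px minx]]|noP] := boolP (has P s).
    have [Fax|Fxa] := leP (F a) (F x).
      exists a; rewrite ?mem_head //; split => // y /predU1P [-> //|ys Py].
      exact: le_trans Fax (minx y ys Py).
    exists x; rewrite ?inE ?xs ?orbT //; split => // y /predU1P [-> _|].
      exact: ltW.
    exact: minx.
  exists a; rewrite ?mem_head //; split => // y /predU1P [-> //|ys Py].
  by case/hasP: noP; exists y.
have [x xs [Px minx]] := IH Ps; exists x; rewrite ?inE ?xs ?orbT //.
by split => // y /predU1P [->|]; [rewrite Pa|exact: minx].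
Qed.

Lemma small_perturbation_gt0 (R : realFieldType) (T : eqType) (s : seq T)
    (f g : T -> R) :
  (forall z, z \in s -> 0 < f z) ->
  exists2 e, 0 < e & forall z, z \in s -> 0 < f z + e * g z.
Proof.
move=> f0; suff [e e0 He] : exists2 e, 0 < e & forall z, z \in s -> e * `|g z| < f z.
  exists e => // z zs; have := He z zs; have := lerNnormlW (lexx `|g z|).
  by move=> ? ?; nra.
elim: s f0 => [|a s IH] f0; first by exists 1.
have [z zs|e1 e10 He1] := IH; first by apply: f0; rewrite inE zs orbT.
have fa0 : 0 < f a by apply: f0; rewrite mem_head.
pose e2 := f a / (`|g a| + 1).
have e20 : 0 < e2 by rewrite divr_gt0 // ltr_wpDl.
have e2ga : e2 * `|g a| < f a.
  by rewrite /e2 mulrAC ltr_pdivrMr ?ltr_wpDl //; nra.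
exists (Num.min e1 e2); first by rewrite lt_min e10 e20.
have le1 : Num.min e1 e2 <= e1 by rewrite ge_min lexx.
have le2 : Num.min e1 e2 <= e2 by rewrite ge_min lexx orbT.
move=> z /predU1P [->|zs].
  by have := ler_wpM2r (normr_ge0 (g a)) le2; lra.
by have := ler_wpM2r (normr_ge0 (g z)) le1; have := He1 z zs; lra.
Qed.

Lemma col_neq0 (V : nmodType) n (x : 'cV[V]_n) : x != 0 -> exists i, x i 0 != 0.
Proof.
rewrite matrix_eq0 negb_forall => /existsP [i].
by rewrite negb_forall => /existsP [j]; rewrite ord1; exists i.
Qed.

Lemma mx_inf_norm_ge p q (B : 'M[int]_(p, q)) i j : (`|B i j| <= mx_inf_norm B)%N.
Proof.
apply: (@leq_trans (\max_(j < q) `|B i j|%N)).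
  exact: (@leq_bigmax _ (fun j => `|B i j|%N) j).
exact: (@leq_bigmax _ (fun i => \max_(j < q) `|B i j|%N) i).
Qed.

Section Dot.
Variables (R : realType) (n : nat).
Implicit Types c x y : 'cV[R]_n.

Lemma dotvC x y : dotv x y = dotv y x.
Proof. by apply: eq_bigr => i _; rewrite mulrC. Qed.

Lemma dotvDl c1 c2 x : dotv (c1 + c2) x = dotv c1 x + dotv c2 x.
Proof. by rewrite /dotv -big_split; apply: eq_bigr => i _; rewrite mxE mulrDl. Qed.

Lemma dotvZl a c x : dotv (a *: c) x = a * dotv c x.
Proof. by rewrite /dotv mulr_sumr; apply: eq_bigr => i _; rewrite mxE mulrA. Qed.

Lemma dotvDr c x y : dotv c (x + y) = dotv c x + dotv c y.
Proof. by rewrite dotvC dotvDl !(dotvC c). Qed.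

Lemma dotvZr a c x : dotv c (a *: x) = a * dotv c x.
Proof. by rewrite dotvC dotvZl dotvC. Qed.

Lemma dotvBr c x y : dotv c (x - y) = dotv c x - dotv c y.
Proof. by rewrite dotvDr -scaleN1r dotvZr mulN1r. Qed.

Lemma dotvBl c1 c2 x : dotv (c1 - c2) x = dotv c1 x - dotv c2 x.
Proof. by rewrite dotvC dotvBr !(dotvC x). Qed.

Lemma dotvE c x : dotv c x = (c^T *m x) 0 0.
Proof. by rewrite mxE; apply: eq_bigr => i _; rewrite mxE. Qed.

Lemma dotv_conv c l x y :
  dotv c (l *: x + (1 - l) *: y) = l * dotv c x + (1 - l) * dotv c y.
Proof. by rewrite dotvDr !dotvZr. Qed.

Lemma dotvv_gt0 x : x != 0 -> 0 < dotv x x.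
Proof.
move=> /col_neq0 [i xi].
rewrite /dotv (bigD1 i) //= ltr_pwDl ?sumr_ge0 // => [|j _].
  by rewrite -expr2 exprn_even_gt0 //= xi.
by rewrite -expr2 sqr_ge0.
Qed.

Lemma exposed_argmax (Q : seq 'cV[R]_n) c : Q != [::] ->
  exists q, [/\ q \in Q, forall y, y \in Q -> dotv c y <= dotv c q &
    exists h, forall y, y \in Q -> y != q -> dotv h y < dotv h q].
Proof.
case: Q => // x0 Q' _; set Q := x0 :: Q'.
have [q0 q0Q [_ q0max]] := @seq_argmin _ _ Q predT (fun y => - dotv c y) isT.
pose top y := dotv c y == dotv c q0.
have /(@seq_argmin _ _ Q top (fun y => - dotv y y)) [q qQ [/eqP cq qmax]] :
  has top Q by apply/hasP; exists q0; rewrite // /top eqxx.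
have cmax y : y \in Q -> dotv c y <= dotv c q.
  by move=> yQ; rewrite cq -lerN2; apply: q0max.
exists q; split => //.
pose S := [seq y <- Q | ~~ top y].
have [y|e e0 He] := @small_perturbation_gt0 _ _ S
  (fun y => dotv c q - dotv c y) (fun y => dotv q q - dotv q y).
  rewrite mem_filter => /andP [ty yQ]; rewrite subr_gt0.
  by rewrite lt_neqAle cmax // andbT cq.
(* Among the [c]-maximizers [q] has the largest [y.y], so [q.y < q.q] for the others. *)
exists (c + e *: q) => y yQ yq; rewrite !dotvDl !dotvZl.
have [ty|nty] := boolP (top y).
  have qy : 0 < dotv (q - y) (q - y) by rewrite dotvv_gt0 // subr_eq0 eq_sym.
  move: qy (qmax y yQ ty); rewrite dotvBl !dotvBr (dotvC y q) lerN2 (eqP ty) -cq.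
  by move=> ? ?; nra.
by have := He y; rewrite mem_filter nty yQ => /(_ isT); lra.
Qed.

End Dot.

Section RowSpaces.
Variable F : fieldType.

Lemma rank_lt_kernel m n (B : 'M[F]_(m, n)) :
  (\rank B < n)%N -> exists2 t : 'cV_n, t != 0 & B *m t = 0.
Proof.
rewrite -mxrank_tr -subn_gt0 -mxrank_ker lt0n mxrank_eq0.
case/rowV0Pn => v /sub_kermxP vB nz; exists v^T.
  by apply: contra nz => /eqP/(congr1 trmx); rewrite trmxK trmx0 => ->.
by rewrite -[B]trmxK -trmx_mul vB trmx0.
Qed.

Lemma rank_full_mulmx_eq0 m n (B : 'M[F]_(m, n)) (t : 'cV[F]_n) :
  \rank B = n -> B *m t = 0 -> t = 0.
Proof.
move=> rB Bt; have freeBT : row_free B^T by rewrite /row_free mxrank_tr rB.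
apply: trmx_inj; apply/eqP; rewrite trmx0 -(mulmx_free_eq0 _ freeBT).
by rewrite -trmx_mul Bt trmx0.
Qed.

Lemma row_free_rowsub_widen p r n (le_pr : (p <= r)%N) (B : 'M[F]_(r, n)) :
  row_free B -> row_free (rowsub (widen_ord le_pr) B).
Proof.
move=> freeB; rewrite rowsubE /row_free mxrankMfree //.
set S := rowsub _ 1%:M; have SST : S *m S^T = 1%:M.
  apply/matrixP => i j; rewrite !mxE (bigD1 (widen_ord le_pr i)) //= big1.
    by rewrite !mxE eqxx mul1r addr0 -val_eqE /= eq_sym.
  by move=> l li; rewrite !mxE eq_sym (negbTE li) mul0r.
by rewrite eqn_leq rank_leq_row -{1}(mxrank1 F p) -SST mxrankM_maxl.
Qed.

Lemma exists_row_free_rowsub m d (N : 'M[F]_(m, d)) p :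
  (p <= \rank N)%N -> exists f : 'I_p -> 'I_m, row_free (rowsub f N).
Proof.
move=> le_pN; exists (maxrankfun N \o widen_ord le_pN).
by rewrite rowsub_comp; apply/row_free_rowsub_widen/maxrowsub_free.
Qed.

(* Inside the row space of [M], the kernel of [C] has dimension
   [d - \rank (M *m C) <= 1]. *)
Lemma kernel_collinear d n p (M : 'M[F]_(d, n)) (C : 'M[F]_(n, p))
    (u1 u2 : 'rV_n) :
  (d <= (\rank (M *m C)).+1)%N -> (u1 <= M)%MS -> (u2 <= M)%MS ->
  u1 *m C = 0 -> u2 *m C = 0 -> u1 != 0 -> exists a, u2 = a *: u1.
Proof.
move=> rMC /submxP [s1 ->] /submxP [s2 ->] s1C s2C nz.
have s1K : (s1 <= kermx (M *m C))%MS by apply/sub_kermxP; rewrite mulmxA.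
have s2K : (s2 <= kermx (M *m C))%MS by apply/sub_kermxP; rewrite mulmxA.
have s1nz : s1 != 0 by apply: contra nz => /eqP ->; rewrite mul0mx.
have rK : (\rank (kermx (M *m C)) <= \rank s1)%N.
  by rewrite mxrank_ker rank_rV s1nz; lia.
have Ks1 : (kermx (M *m C) <= s1)%MS.
  by rewrite -(mxrank_leqif_sup s1K).2 eqn_leq (mxrankS s1K) rK.
by have /sub_rVP [a ->] := submx_trans s2K Ks1; exists a; rewrite scalemxAl.
Qed.

End RowSpaces.

Section Vertices.
Variables (R : realType) (n : nat) (P : 'cV[R]_n -> Prop).
Implicit Types v x y z : 'cV[R]_n.

Lemma vertex_extreme v x y l : is_vertex P v -> P x -> P y -> 0 < l < 1 ->
  v = l *: x + (1 - l) *: y -> x = v \/ y = v.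
Proof.
move=> [_ [c cmax]] Px Py /andP [l0 l1] vE.
have [->|/eqP xv] := eqVneq x v; first by left.
have [->|/eqP yv] := eqVneq y v; first by right.
have := cmax x Px xv; have := cmax y Py yv.
move: vE => /(congr1 (dotv c)); rewrite dotv_conv => ? ? ?; exfalso; nra.
Qed.

Lemma vertex_ray_uniq v z1 z2 r : is_vertex P v -> is_vertex P z1 ->
  is_vertex P z2 -> z1 != v -> 0 < r -> z1 - v = r *: (z2 - v) -> z1 = z2.
Proof.
move=> [Pv _] Vz1 Vz2 z1v r0 zE.
have rayE a x y : x - v = a *: (y - v) -> x = a *: y + (1 - a) *: v.
  by move=> E; rewrite -[x](subrK v) E; apply/matrixP => i j; rewrite !mxE; ring.
have [r1|r1|r1] := ltgtP r 1.
- have [] // := vertex_extreme Vz1 (proj1 Vz2) Pv _ (rayE _ _ _ zE).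
    by rewrite r0 r1.
  by move/eqP; rewrite eq_sym (negbTE z1v).
- have z2E : z2 - v = r^-1 *: (z1 - v) by rewrite zE scalerA mulVf ?gt_eqF ?scale1r.
  have [] // := vertex_extreme Vz2 (proj1 Vz1) Pv _ (rayE _ _ _ z2E).
    by rewrite invr_gt0 r0 invf_lt1.
  by move=> z2v; move: z1v; rewrite -subr_eq0 zE -z2v subrr scaler0 eqxx.
- by apply: (addIr (- v)); rewrite zE r1 scale1r.
Qed.

Lemma aff_dim_span d : aff_dim P d -> exists M : 'M[R]_(d, n),
  row_free M /\ forall y z, P y -> P z -> ((y - z)^T <= M)%MS.
Proof.
move=> [[x0 [Px0 [X [PX freeM]]]] maxd]; set M := \matrix_i (X i - x0)^T.
have sub0 y : P y -> ((y - x0)^T <= M)%MS.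
  move=> Py; apply/negPn/negP => yM.
  pose Y i := if unlift ord_max i is Some j then X j else y.
  apply: (negP (maxd x0 Y Px0 _)) => [i|]; first by rewrite /Y; case: unlift.
  set MY := \matrix_i (Y i - x0)^T.
  have MMY : (M <= MY)%MS.
    apply/row_subP => i; apply: (eq_row_sub (lift ord_max i)).
    by apply/rowP => j; rewrite !mxE /Y liftK.
  have yMY : ((y - x0)^T <= MY)%MS.
    apply: (eq_row_sub ord_max); by apply/rowP => j; rewrite !mxE /Y unlift_none.
  have : (M < MY)%MS.
    by rewrite ltmxE MMY /=; apply: contra yM; exact: submx_trans yMY.
  by move/rank_ltmx; rewrite (eqP freeM) /aff_indep_from /row_free eqn_leq rank_leq_row.
exists M; split => // y z Py Pz.
have -> : (y - z)^T = (y - x0)^T + (-1) *: (z - x0)^T.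
  by rewrite scaleN1r -linearB /= opprB addrA subrK.
by rewrite addmx_sub ?scalemx_sub ?sub0.
Qed.

(* Rescaled onto the hyperplane [h.(z - v) = -1]: when [h] exposes [v], the exposed
   points of the rescaled directions of a face span the extreme rays of its cone at
   [v], i.e. its edges at [v]. *)
Definition rescaled_dir h v z := (dotv h v - dotv h z)^-1 *: (z - v).

Lemma rescaled_dir_inj h v z1 z2 : is_vertex P v ->
  (forall y, P y -> y <> v -> dotv h y < dotv h v) ->
  is_vertex P z1 -> is_vertex P z2 -> z1 != v -> z2 != v ->
  rescaled_dir h v z1 = rescaled_dir h v z2 -> z1 = z2.
Proof.
move=> Vv hv V1 V2 z1v z2v e12.
have dl_gt0 z : is_vertex P z -> z != v -> 0 < dotv h v - dotv h z.
  by move=> [Pz _] /eqP zv; rewrite subr_gt0 hv.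
pose r := (dotv h v - dotv h z1) / (dotv h v - dotv h z2).
apply: (@vertex_ray_uniq v z1 z2 r Vv V1 V2 z1v); first by rewrite divr_gt0 ?dl_gt0.
have -> : z1 - v = (dotv h v - dotv h z1) *: rescaled_dir h v z1.
  by rewrite /rescaled_dir scalerA divff ?scale1r // gt_eqF ?dl_gt0.
by rewrite e12 /rescaled_dir scalerA.
Qed.

Lemma vertex_ray_ge0 v y s : is_vertex P v -> P y -> y != v ->
  P (v + s *: (y - v)) -> 0 <= s.
Proof.
move=> Vv Py yv Ps; rewrite leNgt; apply/negP => s0; pose l := (1 - s)^-1.
have s1 : 0 < 1 - s by rewrite subr_gt0 (lt_trans s0 ltr01).
have l01 : 0 < l < 1 by rewrite invr_gt0 s1 invf_lt1 // ltrDl oppr_gt0.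
have vE : v = l *: (v + s *: (y - v)) + (1 - l) *: y.
  by apply/matrixP => i j; rewrite !mxE /l; field; exact: lt0r_neq0.
have [|] := vertex_extreme Vv Ps Py l01 vE => /eqP; last by rewrite (negbTE yv).
by rewrite addrC -subr_eq0 addrK scaler_eq0 subr_eq0 (negbTE yv) orbF (lt_eqF s0).
Qed.

Lemma monotone_path0 c w : monotone_path P c w w 0.
Proof. by exists (fun _ => w). Qed.

Lemma monotone_path_cons c v u w L : is_edge P v u -> dotv c v < dotv c u ->
  monotone_path P c u w L -> monotone_path P c v w L.+1.
Proof.
move=> vu cvu [f [f0 [fL fmono]]].
exists (fun i => if i is i'.+1 then f i' else v); do 2?split => //.
by case=> [|i] /= iL; [rewrite f0|exact: fmono].
Qed.

End Vertices.

Section Polytope.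
Variables (R : realType) (n m k : nat) (A : 'M[int]_(m, n)) (b : 'cV[R]_m).
Hypothesis box : forall x, polyhedron A b x -> forall i : 'I_n, 0 <= x i 0 <= k%:R.
Local Notation P := (polyhedron A b).
Implicit Types p t v x y z : 'cV[R]_n.

Definition AR : 'M[R]_(m, n) := map_mx (fun z : int => z%:~R) A.

Definition active x i := (AR *m x) i 0 == b i 0.

Definition active_rows x : 'M[R]_(m, n) :=
  \matrix_(i, j) (if active x i then AR i j else 0).

Lemma active_rowsE x y i :
  (active_rows x *m y) i 0 = if active x i then (AR *m y) i 0 else 0.
Proof.
rewrite [LHS]mxE; under eq_bigr do rewrite mxE.
case: ifP => _; first by rewrite mxE.
by rewrite big1 // => j _; rewrite mul0r.
Qed.

Lemma AR_ray p t s i :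
  (AR *m (p + s *: t)) i 0 = (AR *m p) i 0 + s * (AR *m t) i 0.
Proof. by rewrite mulmxDr -scalemxAr !mxE. Qed.

Lemma bounded_direction p t : P p -> t != 0 -> exists i, 0 < (AR *m t) i 0.
Proof.
move=> Pp /col_neq0 [j tj].
have [i ti|tle0] := pickP (fun i => 0 < (AR *m t) i 0); first by exists i.
exfalso; have Pray s : 0 <= s -> P (p + s *: t).
  move=> s0 i; rewrite AR_ray; have := Pp i.
  have : (AR *m t) i 0 <= 0 by rewrite leNgt tle0.
  by move/(mulr_ge0_le0 s0); lra.
pose s := (k%:R + 1) / `|t j 0|.
have s0 : 0 <= s by rewrite divr_ge0 // addr_ge0.
have st : `|s * t j 0| = k%:R + 1.
  by rewrite normrM ger0_norm // divfK // normr_eq0.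
have := box (Pray s s0) j; have := box Pp j; rewrite !mxE.
by move: st; have [st0|st0] := leP 0 (s * t j 0);
  [rewrite ger0_norm|rewrite ltr0_norm]; lra.
Qed.

Lemma ray_exit p t : P p -> t != 0 -> exists s i,
  [/\ 0 <= s, P (p + s *: t), 0 < (AR *m t) i 0, active (p + s *: t) i &
      forall s', P (p + s' *: t) -> s' <= s].
Proof.
move=> Pp t0; have [i0 ti0] := bounded_direction Pp t0.
pose r i := (b i 0 - (AR *m p) i 0) / (AR *m t) i 0.
have /(@seq_argmin _ _ (enum 'I_m) (fun i => 0 < (AR *m t) i 0) r) [i _ [ti rmin]] :
  has (fun i => 0 < (AR *m t) i 0) (enum 'I_m) by apply/hasP; exists i0; rewrite ?mem_enum.
have rmax s j : P (p + s *: t) -> 0 < (AR *m t) j 0 -> s <= r j.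
  by move=> Ps tj; rewrite ler_pdivlMr //; have := Ps j; rewrite AR_ray; lra.
have r0 : 0 <= r i by rewrite divr_ge0 ?subr_ge0 ?(ltW ti) ?Pp.
exists (r i), i; split => // [j||s' Ps']; last exact: rmax.
- rewrite AR_ray; have := Pp j; have [tj|tj] := leP ((AR *m t) j 0) 0.
    by have := mulr_ge0_le0 r0 tj; lra.
  by have := rmin j (mem_enum _ j) tj; rewrite ler_pdivlMr //; lra.
- by rewrite /active AR_ray /r (divfK (lt0r_neq0 ti)) addrC subrK.
Qed.

Lemma active_rank_step p t : P p -> active_rows p *m t = 0 -> t != 0 ->
  exists2 s, 0 < s & P (p + s *: t) /\
    (\rank (active_rows p) < \rank (active_rows (p + s *: t)))%N.
Proof.
move=> Pp pt t0; have [s [i [s0 Ps ti acti _]]] := ray_exit Pp t0.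
have At0 j : active p j -> (AR *m t) j 0 = 0.
  move=> actj; have := congr1 (fun M : 'cV[R]_m => M j 0) pt.
  by rewrite /= active_rowsE actj => ->; rewrite mxE.
have inacti : ~~ active p i by apply: contraL ti => /At0 ->; rewrite ltxx.
have sp : 0 < s.
  rewrite lt_neqAle s0 andbT; apply: contraNneq inacti => s0'.
  by rewrite -s0' scale0r addr0 in acti.
exists s => //; split => //; apply: rank_ltmx; rewrite ltmxE; apply/andP; split.
  apply/row_subP => j; have [actj|inactj] := boolP (active p j).
    apply: (eq_row_sub j); apply/rowP => l; rewrite !mxE actj.
    suff -> : active (p + s *: t) j by [].
    by rewrite /active AR_ray At0 // mulr0 addr0.
  have -> : row j (active_rows p) = 0 by apply/rowP => l; rewrite !mxE (negbTE inactj).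
  exact: sub0mx.
apply: contraL ti => /(submx_trans (row_sub i _)) /submxP [D Di].
have : (row i (active_rows (p + s *: t)) *m t) 0 0 = 0.
  by rewrite Di -mulmxA pt mulmx0 mxE.
by rewrite -row_mul mxE active_rowsE acti => ->; rewrite ltxx.
Qed.

Lemma split_nonvertex p : P p -> (\rank (active_rows p) < n)%N ->
  exists p1 p2 l, [/\ P p1, P p2, 0 < l < 1 & p = l *: p1 + (1 - l) *: p2] /\
    (\rank (active_rows p) < \rank (active_rows p1))%N /\
    (\rank (active_rows p) < \rank (active_rows p2))%N.
Proof.
move=> Pp /rank_lt_kernel [t t0 pt].
have [s1 s10 [P1 r1]] := active_rank_step Pp pt t0.
have pt' : active_rows p *m - t = 0 by rewrite mulmxN pt oppr0.
have nt0 : - t != 0 by rewrite oppr_eq0.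
have [s2 s20 [P2 r2]] := active_rank_step Pp pt' nt0.
exists (p + s1 *: t), (p + s2 *: - t), (s2 / (s1 + s2)); split => //; split => //.
  by rewrite divr_gt0 ?addr_gt0 //= ltr_pdivrMr ?addr_gt0 // mul1r ltrDr.
by apply/matrixP => i j; rewrite !mxE; field; rewrite gt_eqF ?addr_gt0.
Qed.

Lemma vertex_active_rank p : P p ->
  is_vertex P p <-> \rank (active_rows p) = n.
Proof.
move=> Pp; split => [Vp|rn].
  have [rlt|rgt|//] := ltngtP (\rank (active_rows p)) n; last first.
    by rewrite ltnNge rank_leq_col in rgt.
  have [p1 [p2 [l [[P1 P2 l01 pE] [r1 r2]]]]] := split_nonvertex Pp rlt.
  by have [] := vertex_extreme Vp P1 P2 l01 pE => pE'; rewrite pE' ltnn in r1 r2.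
split => //; exists ((active_rows p)^T *m const_mx 1) => y Py yp.
have dotE z : dotv ((active_rows p)^T *m const_mx 1) z =
    \sum_i (if active p i then (AR *m z) i 0 else 0).
  rewrite dotvE trmx_mul trmxK -mulmxA mxE.
  by apply: eq_bigr => i _; rewrite active_rowsE !mxE mul1r.
have le_act i : (if active p i then (AR *m y) i 0 else 0) <=
                (if active p i then (AR *m p) i 0 else 0).
  by case: ifP => // /eqP ->; exact: Py.
rewrite !dotE; have [i neq_i|eq_act] :=
  pickP (fun i => (if active p i then (AR *m y) i 0 else 0) !=
                  (if active p i then (AR *m p) i 0 else 0)).
  rewrite [X in X < _](bigD1 i) //= [X in _ < X](bigD1 i) //=.
  by rewrite ltr_leD ?lt_neqAle ?neq_i ?le_act ?ler_sum.
exfalso; apply: yp; apply/eqP; rewrite -subr_eq0; apply/eqP.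
apply: (rank_full_mulmx_eq0 rn); rewrite mulmxBr; apply/eqP; rewrite subr_eq0; apply/eqP.
by apply/matrixP => i j; rewrite ord1 !active_rowsE; apply/eqP/negbFE/eq_act.
Qed.

Lemma polytope_vertex_ind (Q : 'cV[R]_n -> Prop) :
  (forall v, is_vertex P v -> Q v) ->
  (forall x y l, P x -> P y -> 0 < l < 1 -> Q x -> Q y -> Q (l *: x + (1 - l) *: y)) ->
  forall p, P p -> Q p.
Proof.
move=> Qv Qconv p Pp; move: {2}(n - _)%N (leqnn (n - \rank (active_rows p))) => r.
elim: r p Pp => [|r IH] p Pp rp.
  by apply/Qv/vertex_active_rank => //; apply/eqP; rewrite eqn_leq rank_leq_col; lia.
have [rlt|] := ltnP (\rank (active_rows p)) n; last first.
  by move=> rn; apply/Qv/vertex_active_rank => //; apply/eqP; rewrite eqn_leq rank_leq_col.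
have [p1 [p2 [l [[P1 P2 l01 pE] [r1 r2]]]]] := split_nonvertex Pp rlt.
have := rank_leq_col (active_rows p1); have := rank_leq_col (active_rows p2).
by move=> ? ?; rewrite pE; apply: Qconv => //; apply: IH => //; lia.
Qed.

Lemma exposed_pair_edge x y h : is_vertex P x -> is_vertex P y -> x != y ->
  dotv h x = dotv h y ->
  (forall z, is_vertex P z -> z != x -> z != y -> dotv h z < dotv h x) ->
  is_edge P x y.
Proof.
move=> Vx Vy xy hxy hlt.
have face : forall z, P z -> dotv h z <= dotv h x /\
    (dotv h z = dotv h x -> exists s, 0 <= s <= 1 /\ z = (1 - s) *: x + s *: y).
  apply: polytope_vertex_ind => [v Vv|z1 z2 l _ _ /andP [l0 l1] [le1 eq1] [le2 eq2]].
    have [->|vx] := eqVneq v x.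
      by split => // _; exists 0; rewrite lexx ler01 subr0 scale1r scale0r addr0.
    have [->|vy] := eqVneq v y.
      rewrite hxy; split => // _; exists 1.
      by rewrite lexx ler01 subrr scale0r scale1r add0r.
    by have := hlt v Vv vx vy; split => [|hv]; [exact: ltW|lra].
  rewrite dotv_conv; split => [|hv]; first by nra.
  have [|t1 [/andP [t10 t11] ->]] := eq1; first by nra.
  have [|t2 [/andP [t20 t21] ->]] := eq2; first by nra.
  exists (l * t1 + (1 - l) * t2); split; first by apply/andP; split; nra.
  by apply/matrixP => i j; rewrite !mxE; ring.
do 3?split; [by case: Vx|by case: Vy|exact/eqP|].
by exists h; split; [move=> z /face []|split => // z /face []].
Qed.

End Polytope.

Arguments AR {R n m} A.

Section LatticePolytope.
Variables (R : realType) (n m k : nat) (A : 'M[int]_(m, n)) (b : 'cV[R]_m).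
Hypothesis box : forall x, polyhedron A b x -> forall i : 'I_n, 0 <= x i 0 <= k%:R.
Hypothesis lattice : lattice_vertices (polyhedron A b).
Local Notation P := (polyhedron A b).
Implicit Types v x y z : 'cV[R]_n.

(* All vertices are lattice points of [[0, k]^n]. *)
Definition vertex_list : seq 'cV[R]_n :=
  [seq z <- [seq \col_i ((f i : nat)%:R : R)
               | f : {ffun 'I_n -> 'I_k.+1} <- enum {: {ffun 'I_n -> 'I_k.+1}}]
     | boolp.asbool (is_vertex P z)].

Lemma mem_vertex_list z : z \in vertex_list <-> is_vertex P z.
Proof.
rewrite mem_filter; split => [/andP [/boolp.asboolP] //|Vz].
apply/andP; split; first exact/boolp.asboolP.
have coord i : exists j : 'I_k.+1, z i 0 = (j : nat)%:R.
  have [zi zE] := lattice Vz i; have := box (proj1 Vz) i.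
  rewrite zE ler0z => /andP [zi0 zik]; have zi_nat := gez0_abs zi0.
  have zik' : (`|zi|%N < k.+1)%N.
    by move: zik; rewrite -zi_nat -[k%:R]/((k%:Z)%:~R) ler_int lez_nat ltnS.
  by exists (Ordinal zik') => /=; rewrite -{1}zi_nat.
have [f fE] := fin_all_exists coord.
apply/mapP; exists [ffun i => f i]; first by rewrite mem_enum.
by apply/matrixP => i j; rewrite ord1 mxE ffunE fE.
Qed.

Lemma face_exposed_pair_edge g h x y : is_vertex P x -> is_vertex P y ->
  x != y -> (forall z, is_vertex P z -> dotv g z <= dotv g x) ->
  dotv g y = dotv g x -> dotv h y = dotv h x ->
  (forall z, is_vertex P z -> dotv g z = dotv g x -> z != x -> z != y ->
     dotv h z < dotv h x) ->
  is_edge P x y.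
Proof.
move=> Vx Vy xy gmax gy hy hlt.
pose S := [seq z <- vertex_list | dotv g z != dotv g x].
have [z|e e0 He] := @small_perturbation_gt0 _ _ S
  (fun z => dotv g x - dotv g z) (fun z => dotv h x - dotv h z).
  rewrite mem_filter => /andP [gz /mem_vertex_list Vz].
  by rewrite subr_gt0 lt_neqAle gz gmax.
apply: (exposed_pair_edge (h := g + e *: h) box Vx Vy xy).
  by rewrite !dotvDl !dotvZl gy hy.
move=> z Vz zx zy; rewrite !dotvDl !dotvZl.
have [gz|gz] := eqVneq (dotv g z) (dotv g x).
  by rewrite gz ltrD2l ltr_pM2l // hlt.
by have := He z; rewrite mem_filter gz => /(_ (proj2 (mem_vertex_list z) Vz)); lra.
Qed.

Lemma exists_improving_edge g c x z0 : is_vertex P x ->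
  (forall z, is_vertex P z -> dotv g z <= dotv g x) ->
  is_vertex P z0 -> dotv g z0 = dotv g x -> dotv c x < dotv c z0 ->
  exists y, [/\ is_vertex P y, dotv g y = dotv g x, dotv c x < dotv c y &
                is_edge P x y].
Proof.
move=> Vx gmax Vz0 gz0 cz0; have [Px [h hx]] := Vx.
pose dl z := dotv h x - dotv h z.
have dl_gt0 z : is_vertex P z -> z != x -> 0 < dl z.
  by move=> [Pz _] /eqP zx; rewrite subr_gt0 hx.
pose proj := rescaled_dir h x.
have projE f z : dotv f (proj z) = (dotv f z - dotv f x) / dl z.
  by rewrite /proj /rescaled_dir dotvZr dotvBr mulrC.
have z0x : z0 != x by apply: contraTneq cz0 => ->; rewrite ltxx.
pose S := [seq z <- vertex_list | (dotv g z == dotv g x) && (z != x)].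
have memS z : z \in S <-> [/\ is_vertex P z, dotv g z = dotv g x & z != x].
  rewrite mem_filter; split => [/andP [/andP [/eqP gz zx] /mem_vertex_list]|] //.
  by case=> /mem_vertex_list -> -> ->; rewrite eqxx.
have [|q [/mapP [y yS ->] qmax [f fexp]]] := @exposed_argmax _ _ (map proj S) c.
  by apply/eqP => /(congr1 (fun s => proj z0 \in s)); rewrite map_f //; apply/memS.
have [Vy gy yx] := (memS y).1 yS.
exists y; split => //.
  have := qmax (proj z0) (map_f _ (proj2 (memS z0) (And3 Vz0 gz0 z0x))).
  rewrite !projE => le0y; have : 0 < (dotv c y - dotv c x) / dl y.
    by apply: lt_le_trans le0y; rewrite divr_gt0 ?dl_gt0 // subr_gt0.
  by rewrite pmulr_lgt0 ?invr_gt0 ?dl_gt0 // subr_gt0.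
pose H := f + dotv f (proj y) *: h.
have Hdiff z : is_vertex P z -> z != x ->
    dotv H z - dotv H x = dl z * (dotv f (proj z) - dotv f (proj y)).
  move=> Vz zx; have := dl_gt0 z Vz zx; rewrite projE !dotvDl !dotvZl /dl => dz.
  by field; rewrite gt_eqF.
apply: (@face_exposed_pair_edge g H) => //; first by rewrite eq_sym.
  by apply/eqP; rewrite -subr_eq0 Hdiff // subrr mulr0.
move=> z Vz gz zx zy; rewrite -subr_lt0 Hdiff // pmulr_rlt0 ?dl_gt0 // subr_lt0.
apply: fexp; first by apply/map_f/memS.
by apply: contra zy => /eqP /(rescaled_dir_inj Vx hx Vz Vy zx yx) ->.
Qed.

Lemma generic_max_vertex_uniq c w x : generic_obj P c -> c_max_vertex P c w ->
  is_vertex P x -> (forall z, is_vertex P z -> dotv c z <= dotv c x) -> x = w.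
Proof.
move=> gen [Vw cw] Vx cx; apply/eqP/negPn/negP => xw.
have cwx : dotv c w = dotv c x by apply/eqP; rewrite eq_le cx // cw //; case: Vx.
have : dotv (w - x) x < dotv (w - x) w.
  by rewrite -subr_gt0 -dotvBr dotvv_gt0 // subr_eq0 eq_sym.
case/(exists_improving_edge Vx cx Vw cwx) => y [_ cy _ xy].
exact: gen _ _ xy (esym cy).
Qed.

Definition shadow_vertex a c x :=
  [/\ is_vertex P x,
      exists2 mu, 0 <= mu & forall z, is_vertex P z ->
        dotv (a + mu *: c) z <= dotv (a + mu *: c) x &
      forall z, is_vertex P z -> dotv c x < dotv c z -> dotv a z < dotv a x].

(* One pivot of the shadow-vertex rule: raise [mu] to the next breakpoint [mu'], where
   [a + mu' c] is maximized on a face containing [x] and a [c]-better vertex. *)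
Lemma shadow_step a c x : shadow_vertex a c x ->
  (exists2 z, is_vertex P z & dotv c x < dotv c z) ->
  exists y, [/\ is_edge P x y, dotv c x < dotv c y, dotv a y < dotv a x &
                shadow_vertex a c y].
Proof.
move=> [Vx [mu mu0 xmax] better] [z0 Vz0 cz0].
pose F z := (dotv a x - dotv a z) / (dotv c z - dotv c x).
have /(@seq_argmin _ _ vertex_list (fun z => dotv c x < dotv c z) F) [z1 z1V [cz1 z1min]] :
  has (fun z => dotv c x < dotv c z) vertex_list.
  by apply/hasP; exists z0 => //; apply/mem_vertex_list.
have Vz1 := (mem_vertex_list z1).1 z1V.
pose mu' := F z1.
have mu'E : mu' * (dotv c z1 - dotv c x) = dotv a x - dotv a z1.
  by rewrite divfK // subr_eq0 gt_eqF.
have Fmin z : is_vertex P z -> dotv c x < dotv c z ->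
    mu' * (dotv c z - dotv c x) <= dotv a x - dotv a z.
  move=> Vz cz; have := z1min z ((mem_vertex_list z).2 Vz) cz.
  by rewrite /F -/mu' ler_pdivlMr ?subr_gt0.
have az1 := better z1 Vz1 cz1.
have mumu' : mu <= mu'.
  have := xmax z1 Vz1; rewrite !dotvDl !dotvZl => h1.
  have : 0 < dotv c z1 - dotv c x by rewrite subr_gt0.
  nra.
pose g := a + mu' *: c.
have gE z : dotv g z = dotv a z + mu' * dotv c z by rewrite dotvDl dotvZl.
have gmax z : is_vertex P z -> dotv g z <= dotv g x.
  move=> Vz; rewrite !gE; have [cz|cz] := ltP (dotv c x) (dotv c z).
    by have := Fmin z Vz cz; nra.
  by have := xmax z Vz; rewrite !dotvDl !dotvZl; nra.
have gz1 : dotv g z1 = dotv g x by rewrite !gE; nra.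
have [y [Vy gy cy xy]] := exists_improving_edge Vx gmax Vz1 gz1 cz1.
have ay : dotv a y < dotv a x by move: gy; rewrite !gE; nra.
exists y; split => //; split => //.
  by exists mu'; [exact: le_trans mumu'|move=> z Vz; rewrite -/g gy gmax].
by move=> z Vz cz; have := gmax z Vz; rewrite -gy !gE; nra.
Qed.

Section ShadowPath.
Variables (a c w : 'cV[R]_n).
Hypotheses (gen : generic_obj P c) (wmax : c_max_vertex P c w).
Hypothesis a_int : forall z, is_vertex P z -> exists zz : int, dotv a z = zz%:~R.

Lemma shadow_progress x : shadow_vertex a c x -> x = w \/
  dotv a w < dotv a x /\ exists y, [/\ is_edge P x y, dotv c x < dotv c y,
    dotv a y <= dotv a x - 1 & shadow_vertex a c y].
Proof.
move=> Sx; have [Vx _ better] := Sx; have [Vw cw] := wmax.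
pose improving z := dotv c x < dotv c z.
have [/hasP [z /mem_vertex_list Vz cz]|none] := boolP (has improving vertex_list).
  right; have cxw : dotv c x < dotv c w by apply: lt_le_trans cz (cw _ (proj1 Vz)).
  split; first exact: better Vw cxw.
  have [y [xy cxy ayx Sy]] := shadow_step Sx (ex_intro2 _ _ z Vz cz).
  have [Vy _ _] := Sy; exists y; split => //.
  move: ayx; have [zx ->] := a_int Vx; have [zy ->] := a_int Vy.
  rewrite ltr_int => zyx; have : (zy <= zx - 1)%R by lia.
  by rewrite -(ler_int R) intrB.
left; apply: generic_max_vertex_uniq gen wmax Vx _ => z Vz; rewrite leNgt.
by apply: contra none => cz; apply/hasP; exists z => //; apply/mem_vertex_list.
Qed.

Lemma shadow_path N x : shadow_vertex a c x -> dotv a x - dotv a w <= N%:R ->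
  exists L, (L <= N)%N /\ monotone_path P c x w L.
Proof.
elim: N x => [|N IH] x Sx axw.
all: have [->|[awx [y [xy cxy ayx Sy]]]] := shadow_progress Sx;
  first by exists 0%N; split => //; apply: monotone_path0.
  by lra.
have [|L [LN yw]] := IH y Sy; first by move: axw; rewrite -natr1; lra.
by exists L.+1; split => //; apply: monotone_path_cons yw.
Qed.

End ShadowPath.

Local Notation intmx M := (map_mx (fun z : int => z%:~R) M).
Local Notation act := (active_rows A b).

Definition face_on_line a v := forall y1 y, P y1 -> P y ->
  dotv a y1 = dotv a v -> dotv a y = dotv a v -> y1 != v ->
  exists s, y = v + s *: (y1 - v).

Definition tight_rows_sum v p (f : 'I_p -> 'I_m) : 'cV[int]_n :=
  \col_l \sum_j (if active A b v (f j) then A (f j) l else 0).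

Lemma tight_rows_sum_bound v p (f : 'I_p -> 'I_m) l :
  `|tight_rows_sum v f l 0| <= (p * mx_inf_norm A)%:Z.
Proof.
rewrite mxE; apply: le_trans (ler_norm_sum _ _ _) _.
have rowA j : `|if active A b v (f j) then A (f j) l else 0| <= (mx_inf_norm A)%:Z.
  by case: ifP => _; rewrite ?normr0 // -abszE lez_nat mx_inf_norm_ge.
by apply: le_trans (ler_sum _ (fun j _ => rowA j)) _; rewrite sumr_const card_ord; lia.
Qed.

Lemma tight_rows_sum_face v p (f : 'I_p -> 'I_m) y : P y ->
  let a := intmx (tight_rows_sum v f) in
  dotv a y <= dotv a v /\ (dotv a y = dotv a v -> rowsub f (act v) *m (y - v) = 0).
Proof.
move=> Py a; set C := rowsub f (act v).
have Cy z j : (C *m z) j 0 = if active A b v (f j) then (AR A *m z) (f j) 0 else 0.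
  by rewrite mul_rowsub_mx mxE active_rowsE.
have aE z : dotv a z = \sum_j (C *m z) j 0.
  rewrite /dotv; under eq_bigr do rewrite !mxE rmorph_sum mulr_suml.
  rewrite exchange_big; apply: eq_bigr => j _; rewrite Cy mxE; case: ifP => _.
    by apply: eq_bigr => l _; rewrite mxE.
  by rewrite big1 // => l _; rewrite mul0r.
have le_row j : (C *m y) j 0 <= (C *m v) j 0.
  by rewrite !Cy; case: ifP => // /eqP ->; exact: Py.
split => [|ay]; first by rewrite !aE; apply: ler_sum => j _; exact: le_row.
have eqj j : (C *m v) j 0 - (C *m y) j 0 = 0.
  apply: (@psumr_eq0P _ _ predT (fun j => (C *m v) j 0 - (C *m y) j 0)) => // [i _|].
    by rewrite subr_ge0 le_row.
  by rewrite sumrB -!aE ay subrr.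
rewrite mulmxBr; apply/eqP; rewrite subr_eq0; apply/eqP/matrixP => j l.
by rewrite ord1; apply/eqP; rewrite eq_sym -subr_eq0 eqj.
Qed.

Lemma short_face_normal d v : aff_dim P d -> is_vertex P v ->
  exists aZ : 'cV[int]_n, [/\
    forall l, `|aZ l 0| <= (d.-1 * mx_inf_norm A)%:Z,
    forall y, P y -> dotv (intmx aZ) y <= dotv (intmx aZ) v &
    face_on_line (intmx aZ) v].
Proof.
move=> /aff_dim_span [M [freeM Mspan]] Vv.
have rv : \rank (act v) = n := (vertex_active_rank box (proj1 Vv)).1 Vv.
have rN : \rank (act v *m M^T) = d.
  rewrite -mxrank_tr trmx_mul trmxK mxrankMfree ?(eqP freeM) //.
  by rewrite /row_free mxrank_tr rv.
have [f freef] : exists f : 'I_d.-1 -> 'I_m, row_free (rowsub f (act v *m M^T)).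
  by apply: exists_row_free_rowsub; rewrite rN leq_pred.
exists (tight_rows_sum v f); split => [l|y /(tight_rows_sum_face v f) []//|].
  exact: tight_rows_sum_bound.
move=> y1 y P1 Py a1 ay y1v; set C := rowsub f (act v).
have face z : P z -> dotv (intmx (tight_rows_sum v f)) z =
    dotv (intmx (tight_rows_sum v f)) v -> (z - v)^T *m C^T = 0.
  by move=> Pz /((tight_rows_sum_face v f Pz).2) Cz; rewrite -trmx_mul Cz trmx0.
have rC : (d <= (\rank (M *m C^T)).+1)%N.
  by rewrite -mxrank_tr trmx_mul trmxK /C mul_rowsub_mx (eqP freef) leqSpred.
have y1v' : (y1 - v)^T != 0.
  apply: contra y1v => /eqP /(congr1 trmx).
  by rewrite trmxK trmx0 => /eqP; rewrite subr_eq0.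
have [al yE] := kernel_collinear rC (Mspan _ _ P1 (proj1 Vv)) (Mspan _ _ Py (proj1 Vv))
  (face _ P1 a1) (face _ Py ay) y1v'.
exists al; rewrite -linearZ /= in yE; move/trmx_inj: yE => <-.
by rewrite addrC subrK.
Qed.

Lemma line_face_segment a v y1 : is_vertex P v ->
  (forall y, P y -> dotv a y <= dotv a v) -> face_on_line a v ->
  P y1 -> dotv a y1 = dotv a v -> y1 != v ->
  exists u, [/\ is_vertex P u, u != v, dotv a u = dotv a v &
    forall y, P y -> dotv a y = dotv a v ->
      exists t, 0 <= t <= 1 /\ y = (1 - t) *: v + t *: u].
Proof.
move=> Vv amax line P1 a1 y1v; have Pv := proj1 Vv; set g := y1 - v.
have g0 : g != 0 by rewrite subr_eq0.
have y1E : y1 = v + 1 *: g by rewrite scale1r addrC subrK.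
have a_ray s : dotv a (v + s *: g) = dotv a v.
  by rewrite dotvDr dotvZr dotvBr a1 subrr mulr0 addr0.
have [s [i [s0 Ps gi acti smax]]] := ray_exit box Pv g0.
have s1 : 1 <= s by apply: smax; rewrite -y1E.
have s_gt0 : 0 < s := lt_le_trans ltr01 s1.
pose u := v + s *: g; exists u; split => //.
- split => //; exists (a + (row i (AR A))^T) => y Py yu.
  have rowE z : dotv (row i (AR A))^T z = (AR A *m z) i 0.
    by rewrite dotvE trmxK -row_mul mxE.
  rewrite !dotvDl !rowE (eqP acti) a_ray; have byi := Py i.
  have [ayv|ayv] := ltP (dotv a y) (dotv a v); first exact: ltr_leD.
  have {}ayv : dotv a y = dotv a v by apply: le_anti; rewrite amax.
  rewrite ayv ltrD2l lt_neqAle byi andbT; apply/eqP => byi'; apply: yu.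
  have [s' ys'] := line y1 y P1 Py a1 ayv y1v.
  move: byi'; subst y; rewrite -(eqP acti) !AR_ray => /addrI /mulIf s's.
  by rewrite s's ?gt_eqF.
- rewrite /u -subr_eq0 addrC addKr scaler_eq0 (negbTE g0) orbF.
  by rewrite gt_eqF.
- exact: a_ray.
move=> y Py ay; have [s' ys'] := line y1 y P1 Py a1 ay y1v.
have s'0 : 0 <= s' by apply: (vertex_ray_ge0 Vv P1 y1v); rewrite -ys'.
have s's : s' <= s by apply: smax; rewrite -ys'.
exists (s' / s); split; first by rewrite divr_ge0 ?(ltW s_gt0) //= ler_pdivrMr // mul1r.
rewrite ys' /u; apply/matrixP => j l; rewrite !mxE; field; exact: lt0r_neq0.
Qed.

Lemma face_vertex_or_edge a v : is_vertex P v ->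
  (forall y, P y -> dotv a y <= dotv a v) -> face_on_line a v ->
  (forall z, is_vertex P z -> z != v -> dotv a z < dotv a v) \/
  exists u, [/\ is_vertex P u, is_edge P v u, dotv a u = dotv a v &
    forall z, is_vertex P z -> z != v -> z != u -> dotv a z < dotv a v].
Proof.
move=> Vv amax line.
have [[y1 [P1 a1 y1v]]|none] :=
  boolp.pselect (exists y1, [/\ P y1, dotv a y1 = dotv a v & y1 != v]); last first.
  left=> z [Pz _] zv; rewrite lt_neqAle amax // andbT.
  by apply/eqP => az; apply: none; exists z.
have [u [Vu uv au seg]] := line_face_segment Vv amax line P1 a1 y1v.
right; exists u; split => //.
  do 3?split; [by case: Vv|by case: Vu|by apply/eqP; rewrite eq_sym|].
  by exists a; split => //; split.
move=> z Vz zv zu; rewrite lt_neqAle amax ?andbT; last by case: Vz.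
apply/eqP => /(seg _ (proj1 Vz)) [t [/andP [t0 t1] zE]].
have [t0'|t0'] := eqVneq t 0.
  by move: zv; rewrite zE t0' subr0 scale1r scale0r addr0 eqxx.
have [t1'|t1'] := eqVneq t 1.
  by move: zu; rewrite zE t1' subrr scale0r add0r scale1r eqxx.
have t01 : 0 < 1 - t < 1.
  by rewrite subr_gt0 ltrBlDl ltrDr !lt_neqAle t0 t1 t1' eq_sym t0'.
have zE' : z = (1 - t) *: v + (1 - (1 - t)) *: u.
  by rewrite zE; congr (_ + _ *: _); rewrite opprB addrCA subrr addr0.
case: (vertex_extreme Vz (proj1 Vv) (proj1 Vu) t01 zE') => [vz|uz].
  by rewrite -vz eqxx in zv.
by rewrite -uz eqxx in zu.
Qed.

Lemma dotv_box_diff_le (a : 'cV[R]_n) B x w : (forall l, `|a l 0| <= B%:R) -> P x -> P w ->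
  dotv a x - dotv a w <= (B * n * k)%:R.
Proof.
move=> aB Px Pw; rewrite -dotvBr /dotv.
have term l : a l 0 * (x - w) l 0 <= (B * k)%:R.
  apply: le_trans (ler_norm _) _; rewrite normrM natrM ler_pM //.
  have := box Px l; have := box Pw l; rewrite !mxE ler_norml.
  by move=> /andP [? ?] /andP [? ?]; apply/andP; split; lra.
apply: le_trans (ler_sum _ (fun l _ => term l)) _.
by rewrite sumr_const card_ord -mulrnA mulnAC.
Qed.

Lemma integral_shadow_path (aZ : 'cV[int]_n) B c w x :
  generic_obj P c -> c_max_vertex P c w -> (forall l, `|aZ l 0| <= B%:Z) ->
  is_vertex P x -> (forall z, is_vertex P z -> dotv (intmx aZ) z <= dotv (intmx aZ) x) ->
  (forall z, is_vertex P z -> dotv c x < dotv c z ->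
     dotv (intmx aZ) z < dotv (intmx aZ) x) ->
  exists L, (L <= B * n * k)%N /\ monotone_path P c x w L.
Proof.
move=> gen wmax aZB Vx amax better.
have a_int z : is_vertex P z -> exists zz : int, dotv (intmx aZ) z = zz%:~R.
  move=> Vz; have [zc zcE] := fin_all_exists (lattice Vz).
  exists (\sum_l aZ l 0 * zc l); rewrite rmorph_sum; apply: eq_bigr => l _.
  by rewrite mxE zcE rmorphM.
apply: (shadow_path gen wmax a_int).
  by split => //; exists 0 => // z; rewrite scale0r addr0; exact: amax.
apply: dotv_box_diff_le (proj1 Vx) (proj1 (proj1 wmax)) => l.
by rewrite mxE -intr_norm -[B%:R]/(B%:Z%:~R) ler_int.
Qed.

Lemma lattice_polytope_monotone_diameter d : aff_dim P d ->
  monotone_diameter_le P (d.-1 * mx_inf_norm A * n * k).+1.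
Proof.
move=> Pd c v w gen Vv wmax.
have [aZ [aZB amax line]] := short_face_normal Pd Vv.
have path_from := integral_shadow_path gen wmax aZB.
set a := intmx aZ in amax line path_from.
have neq_of_lt x y : dotv c x < dotv c y -> y != x.
  by move=> cxy; apply: contraTneq cxy => ->; rewrite ltxx.
have from_v : (forall z, is_vertex P z -> dotv c v < dotv c z -> dotv a z < dotv a v) ->
    exists L, (L <= (d.-1 * mx_inf_norm A * n * k).+1)%N /\ monotone_path P c v w L.
  move=> better; have [L [LN vw]] := path_from v Vv (fun z Vz => amax z (proj1 Vz)) better.
  by exists L; rewrite leqW.
case: (face_vertex_or_edge Vv amax line) => [vtop|[u [Vu vu au utop]]].
  by apply: from_v => z Vz /neq_of_lt; apply: vtop.
have [cvu|cuv|] := ltgtP (dotv c v) (dotv c u); last by move/(gen _ _ vu).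
  have [|z Vz cuz|L [LN uw]] := path_from u Vu.
  - by move=> z Vz; rewrite au amax //; case: Vz.
  - by rewrite au utop ?(neq_of_lt _ _ cuz) ?(neq_of_lt _ _ (lt_trans cvu cuz)).
  by exists L.+1; split => //; apply: monotone_path_cons vu cvu uw.
apply: from_v => z Vz cvz; apply: utop; rewrite ?(neq_of_lt _ _ cvz) //.
exact: neq_of_lt (lt_trans cuv cvz).
Qed.

End LatticePolytope.

Theorem mainTheorem4 (R : realType) (n m k d : nat)
  (A : 'M[int]_(m, n)) (b : 'cV[R]_m) :
  (forall x, polyhedron A b x -> forall i : 'I_n, 0 <= x i 0 <= k%:R) ->
  lattice_vertices (polyhedron A b) ->
  aff_dim (polyhedron A b) d ->
  monotone_diameter_le (polyhedron A b)
    ((d.-1 * mx_inf_norm A * n * k).+1)%N.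
Proof.
move=> box lattice Pd; exact: lattice_polytope_monotone_diameter.
Qed.
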